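(* Let $k\ge2$, let $A=\{a_1,\dots,a_n\}$ be a sorted multiset of positive integers ($a_1\le\dots\le a_n$), and let $p$ be an integer with $1\le p\le n-k+1$. Let $Q=\sum_{i=1}^pa_i$ and $q=\max\{i: a_i\le Q\}$. Then the $k$-SSR$_R$ instance $(A,p)$ has an optimal solution $(S_1,\dots,S_k)$ satisfying: (1) every set $S_i$ containing only elements $j$ with $a_j\le Q$ satisfies $\Sigma(S_i,A)<2Q$; (2) every set $S_i$ containing an element $j$ with $a_j>Q$ is a singleton; (3) if $x\ge0$ denotes the number of singleton sets $\{j\}$ in the solution with $a_j>Q$, then the union of these singleton sets is $\{q+1,q+2,\dots,q+x\}$.
   Context: $[n]=\{1,\dots,n\}$; ''elements'' of sets are indices in $[n]$. For $S\subseteq[n]$, $\Sigma(S,A)=\sum_{i\in S}a_i$. For pairwise disjoint $S_1,\dots,S_k\subseteq[n]$, $\mathcal{R}(S_1,\dots,S_k,A)=\max_i\Sigma(S_i,A)/\min_i\Sigma(S_i,A)$ if the minimum is positive and $+\infty$ otherwise. The $k$-SSR$_R$ problem: given sorted $A$ and integer $p$ with $1\le p\le n-k+1$, find pairwise disjoint $S_1,\dots,S_k\subseteq[n]$ with $\max(S_1)=p$ and $\max(S_i)>p$ for $1<i\le k$ minimizing $\mathcal{R}(S_1,\dots,S_k,A)$; an optimal solution is a feasible one of minimum ratio. *)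

(* Indices of [n] are elements of 'I_n.+1 different from 0;
   the multiset A is a function nat -> nat, a_i = A i for 1 <= i <= n. *)
From HB Require Import structures.
From mathcomp Require Import all_boot all_order all_algebra.
Set Implicit Arguments. Unset Strict Implicit. Unset Printing Implicit Defensive.
Import Order.TTheory GRing.Theory Num.Theory.

Definition Sigma n (S : {set 'I_n.+1}) (A : nat -> nat) : nat :=
  \sum_(i in S) A i.

(* max(S) (only used on nonempty sets; 0 on the empty set) *)
Definition maxS n (S : {set 'I_n.+1}) : nat := \max_(i in S) (i : nat).

Definition maxsum n k (S : 'I_k -> {set 'I_n.+1}) A : nat :=
  \max_(i < k) Sigma (S i) A.
Definition minsum n k (S : 'I_k -> {set 'I_n.+1}) A : nat :=
  \big[minn/maxsum S A]_(i < k) Sigma (S i) A.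

(* R(S_1,...,S_k, A); None encodes +infinity *)
Definition ratio n k (S : 'I_k -> {set 'I_n.+1}) A : option rat :=
  if 0 < minsum S A then Some ((maxsum S A)%:R / (minsum S A)%:R)%R else None.

Definition ratio_le (r1 r2 : option rat) : bool :=
  match r1, r2 with
  | _, None => true
  | None, Some _ => false
  | Some a, Some b => (a <= b)%R
  end.

(* feasibility for k-SSR_R instance (A, p); S_1 is the set with index 0 *)
Definition feasible n k (A : nat -> nat) (p : nat) (S : 'I_k -> {set 'I_n.+1}) : Prop :=
  (forall i, (ord0 : 'I_n.+1) \notin S i) /\
  (forall i j, i != j -> [disjoint S i & S j]) /\
  (forall i : 'I_k, val i = 0 -> maxS (S i) = p) /\
  (forall i : 'I_k, val i <> 0 -> p < maxS (S i)).

Definition optimal n k A p (S : 'I_k -> {set 'I_n.+1}) : Prop :=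
  feasible A p S /\
  forall T : 'I_k -> {set 'I_n.+1}, feasible A p T -> ratio_le (ratio S A) (ratio T A).

(* Among the optimal solutions take one that minimises the sum of all indices
   it uses. Replacing one set S_i by a set X with
   min_j Sigma(S_j) <= Sigma(X) <= Sigma(S_i) cannot increase the ratio, so no
   such replacement may lower that index sum. As min_j Sigma(S_j) <= Sigma(S_1)
   <= Q, dropping a non-maximal element e would be such a replacement whenever
   Sigma(S_i) - a_e >= Q; this happens if Sigma(S_i) >= 2Q while all a_j <= Q,
   and if the maximal element of S_i exceeds Q, giving (1) and (2). Likewise a
   singleton {j} with a_j > Q could be traded for an unused index j' with
   q < j' < j, since then Q < a_j' <= a_j; so the indices of these singletons
   form an interval starting at q + 1. *)

From HB Require Import structures.
From mathcomp Require Import all_boot all_order all_algebra.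
From mathcomp Require Import zify.
From Stdlib Require Import Classical FunctionalExtensionality.
Set Implicit Arguments. Unset Strict Implicit. Unset Printing Implicit Defensive.
Import Order.TTheory GRing.Theory Num.Theory.

Section SumBounds.
Variables (n k : nat) (S : 'I_k -> {set 'I_n.+1}) (A : nat -> nat).

Lemma Sigma_le_maxsum i : Sigma (S i) A <= maxsum S A.
Proof. exact: (@bigop.leq_bigmax _ (fun j => Sigma (S j) A) i). Qed.

Lemma maxsum_le c : (forall i, Sigma (S i) A <= c) -> maxsum S A <= c.
Proof. by move=> le_c; apply/bigop.bigmax_leqP => i _; apply: le_c. Qed.

Lemma minsum_le_Sigma i : minsum S A <= Sigma (S i) A.
Proof.
rewrite /minsum; have : i \in index_enum 'I_k by rewrite mem_index_enum.
elim: (index_enum 'I_k) => [//|j r IHr]; rewrite inE big_cons.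
case/orP => [/eqP <-|/IHr]; first exact: geq_minl.
exact/leq_trans/geq_minr.
Qed.

Lemma minsum_ge c :
  c <= maxsum S A -> (forall i, c <= Sigma (S i) A) -> c <= minsum S A.
Proof.
move=> c_le ge_c; apply: (big_ind (fun x => c <= x)) => // x y cx cy.
by rewrite leq_min cx cy.
Qed.

End SumBounds.

Lemma Sigma_D1 n (X : {set 'I_n.+1}) A e :
  e \in X -> Sigma X A = A e + Sigma (X :\ e) A.
Proof. exact: big_setD1. Qed.

Lemma Sigma_le_sum_nat n (X : {set 'I_n.+1}) A a b :
  b <= n.+1 -> (forall j, j \in X -> a <= j < b) ->
  Sigma X A <= \sum_(a <= i < b) A i.
Proof.
move=> le_b X_ab; rewrite (big_nat_widen _ _ _ _ _ le_b) big_geq_mkord.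
rewrite /Sigma big_mkcond [leqRHS]big_mkcond /=; apply: leq_sum => j _.
by case: ifP => // /X_ab /andP[-> ->].
Qed.

Lemma ratio_le_trans : transitive ratio_le.
Proof. by move=> [b|] [a|] [c|] //=; apply: le_trans. Qed.

Lemma ratio_le_total : total ratio_le.
Proof. by move=> [a|] [b|] //=; apply: le_total. Qed.

Lemma ratio_le_sums_within n k (S T : 'I_k -> {set 'I_n.+1}) A :
  0 < k -> 0 < minsum S A ->
  (forall i, minsum S A <= Sigma (T i) A <= maxsum S A) ->
  ratio_le (ratio T A) (ratio S A).
Proof.
move=> k_gt0 minS_gt0 within.
have maxT_le : maxsum T A <= maxsum S A.
  by apply: maxsum_le => i; case/andP: (within i).
have minS_le : minsum S A <= minsum T A.
  apply: minsum_ge => [|i]; last by case/andP: (within i).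
  apply: leq_trans (Sigma_le_maxsum T A (Ordinal k_gt0)).
  by case/andP: (within (Ordinal k_gt0)).
have minT_gt0 := leq_trans minS_gt0 minS_le.
rewrite /ratio minS_gt0 minT_gt0 /=.
rewrite ler_pdivrMr ?ltr0n // mulrAC ler_pdivlMr ?ltr0n //.
by apply: ler_pM; rewrite ?ler0n ?ler_nat.
Qed.

Lemma maxS1 n (x : 'I_n.+1) : maxS [set x] = x.
Proof. by rewrite /maxS big_set1. Qed.

Lemma leq_maxS n (X : {set 'I_n.+1}) j : j \in X -> (j : nat) <= maxS X.
Proof. exact: (@bigop.leq_bigmax_cond _ (mem X) (fun i => val i)). Qed.

Lemma maxS_mem n (X : {set 'I_n.+1}) :
  0 < maxS X -> exists2 m, m \in X & val m = maxS X.
Proof.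
move=> maxX_gt0; have : 0 < #|X|.
  by rewrite card_gt0; apply: contraTneq maxX_gt0 => ->; rewrite /maxS big_set0.
by move/(@eq_bigmax_cond _ (mem X) (fun i => val i)) => [m mX m_max]; exists m.
Qed.

Lemma maxS_subset n (X Y : {set 'I_n.+1}) m :
  X \subset Y -> m \in X -> val m = maxS Y -> maxS X = maxS Y.
Proof.
move=> sXY mX m_max; apply/eqP; rewrite eqn_leq -{2}m_max leq_maxS // andbT.
by apply/bigop.bigmax_leqP => i iX; apply/leq_maxS/(subsetP sXY).
Qed.

Section Feasible.
Variables (n k : nat) (A : nat -> nat) (p : nat) (S : 'I_k -> {set 'I_n.+1}).
Hypothesis S_feas : feasible A p S.

Lemma feasible_mem_range i (j : 'I_n.+1) : j \in S i -> 1 <= j <= n.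
Proof.
case: S_feas => S_ord0 _ jS; rewrite -[j <= n]ltnS ltn_ord andbT lt0n.
by apply: contraNneq (S_ord0 i) => /(@ord_inj _ _ ord0) <-.
Qed.

Hypothesis p_gt0 : 0 < p.

Lemma feasible_maxS_gt0 i : 0 < maxS (S i).
Proof.
case: S_feas => _ [_ [max0 max_gt]].
by case: (eqVneq (i : nat) 0) => [/max0 ->|/eqP/max_gt/(leq_ltn_trans (leq0n p))].
Qed.

Hypothesis A_pos : forall i, 1 <= i <= n -> 0 < A i.

Lemma feasible_Sigma_gt0 i : 0 < Sigma (S i) A.
Proof.
have [m mS _] := maxS_mem (feasible_maxS_gt0 i).
by rewrite (Sigma_D1 _ mS) ltn_addr // A_pos // (feasible_mem_range mS).
Qed.

Lemma feasible_minsum_gt0 : 0 < k -> 0 < minsum S A.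
Proof.
move=> k_gt0; apply: minsum_ge => [|i]; last exact: feasible_Sigma_gt0.
exact: leq_trans (feasible_Sigma_gt0 (Ordinal k_gt0)) (Sigma_le_maxsum _ _ _).
Qed.

End Feasible.

Definition upd n k (S : 'I_k -> {set 'I_n.+1}) i0 (X : {set 'I_n.+1}) :
  'I_k -> {set 'I_n.+1} := fun i => if i == i0 then X else S i.

Lemma feasible_upd n k A p (S : 'I_k -> {set 'I_n.+1}) i0 (X : {set 'I_n.+1}) :
  feasible A p S -> ord0 \notin X -> (forall i, i != i0 -> [disjoint X & S i]) ->
  (val i0 = 0 -> maxS X = p) -> (val i0 <> 0 -> p < maxS X) ->
  feasible A p (upd S i0 X).
Proof.
move=> [S_ord0 [S_disj [max0 max_gt]]] X_ord0 X_disj X_max0 X_max_gt.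
rewrite /upd; split; last split; last split.
- by move=> i; case: eqP.
- move=> i j ne_ij.
  case: (eqVneq i i0) => [eq_i|ne_i]; case: (eqVneq j i0) => [eq_j|ne_j] /=.
  + by move: ne_ij; rewrite eq_i eq_j eqxx.
  + exact: X_disj.
  + by rewrite disjoint_sym X_disj.
  + exact: S_disj.
- by move=> i; case: eqP => [->|_]; [apply: X_max0 | apply: max0].
- by move=> i; case: eqP => [->|_]; [apply: X_max_gt | apply: max_gt].
Qed.

Lemma feasible_upd_subset n k A p (S : 'I_k -> {set 'I_n.+1}) i0 (X : {set 'I_n.+1}) :
  feasible A p S -> X \subset S i0 -> maxS X = maxS (S i0) ->
  feasible A p (upd S i0 X).
Proof.
move=> S_feas sXS X_max; have [S_ord0 [S_disj [max0 max_gt]]] := S_feas.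
apply: feasible_upd; rewrite ?X_max //.
- by apply: contra (S_ord0 i0); apply: (subsetP sXS).
- by move=> i ne_i; apply: disjointWl sXS _; apply: S_disj; rewrite eq_sym.
- exact: max0.
- exact: max_gt.
Qed.

Lemma feasible_upd_unused n k A p (S : 'I_k -> {set 'I_n.+1}) i0 j :
  feasible A p S -> (forall i, j \notin S i) -> val i0 <> 0 -> p < j ->
  feasible A p (upd S i0 [set j]).
Proof.
move=> S_feas j_unused i0_ne0 p_lt_j; apply: feasible_upd; rewrite ?maxS1 //.
- by rewrite in_set1; apply: contraTneq p_lt_j => <-.
- by move=> i _; rewrite disjoints1.
Qed.

Definition idxsum n (X : {set 'I_n.+1}) : nat := \sum_(j in X) (j : nat).

Lemma idxsum_D1 n (X : {set 'I_n.+1}) e : e \in X -> idxsum X = e + idxsum (X :\ e).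
Proof. exact: big_setD1. Qed.

Definition potential n k (S : 'I_k -> {set 'I_n.+1}) : nat := \sum_(i < k) idxsum (S i).

Lemma potential_upd_lt n k (S : 'I_k -> {set 'I_n.+1}) i0 (X : {set 'I_n.+1}) :
  idxsum X < idxsum (S i0) -> potential (upd S i0 X) < potential S.
Proof.
move=> lt_X; rewrite /potential (bigD1 i0) // [ltnRHS](bigD1 i0) //= /upd eqxx.
rewrite (eq_bigr (fun i => idxsum (S i))) ?ltn_add2r // => i /negbTE -> //.
Qed.

Lemma exists_argmin_seq (T : eqType) (X : Type) (le : rel X) (f : T -> X)
    (P : T -> Prop) (s : seq T) :
  transitive le -> total le -> (exists2 x, x \in s & P x) ->
  exists x, P x /\ forall y, y \in s -> P y -> le (f x) (f y).
Proof.
move=> le_trans le_total; have le_refl x : le x x by case/orP: (le_total x x).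
elim: s => [[x //]|a s IHs] [x xs Px].
case: (classic (exists2 y, y \in s & P y)) => [/IHs [m [Pm m_min]]|none].
  have [Pa|nPa] := classic (P a); last first.
    exists m; split=> // y; rewrite inE => /orP[/eqP -> /nPa //|]; exact: m_min.
  case/orP: (le_total (f a) (f m)) => [am|ma].
    exists a; split=> // y; rewrite inE => /orP[/eqP -> _ //|ys Py].
    exact: le_trans am (m_min y ys Py).
  exists m; split=> // y; rewrite inE => /orP[/eqP -> _ //|]; exact: m_min.
have Pa : P a.
  by move: xs; rewrite inE => /orP[/eqP <- //|xs]; case: none; exists x.
exists a; split=> // y; rewrite inE => /orP[/eqP -> _ //|ys Py].
by case: none; exists y.
Qed.

Lemma exists_argmin_nat (T : Type) (P : T -> Prop) (f : T -> nat) :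
  (exists x, P x) -> exists x, P x /\ forall y, P y -> f x <= f y.
Proof.
case=> x0 Px0.
suff min_below b : forall x, P x -> f x <= b ->
    exists x, P x /\ forall y, P y -> f x <= f y.
  exact: min_below (f x0) x0 Px0 (leqnn _).
elim: b => [|b IHb] x Px le_fx.
  by exists x; split=> // y _; move: le_fx; rewrite leqn0 => /eqP ->.
case: (classic (exists2 y, P y & f y < f x)) => [[y Py lt_fy]|none].
  exact: IHb y Py (leq_trans lt_fy le_fx).
exists x; split=> // y Py; rewrite leqNgt; apply/negP => lt_fy.
by apply: none; exists y.
Qed.

Lemma exists_feasible n k A p :
  1 <= p -> p + k <= n + 1 -> exists S : 'I_k -> {set 'I_n.+1}, feasible A p S.
Proof.
move=> p_gt0 pk_le; pose a (i : 'I_k) : 'I_n.+1 := inord (p + i).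
have val_a i : val (a i) = p + i by rewrite /a /= inordK //; have := ltn_ord i; lia.
exists (fun i => [set a i]); split; last split; last split.
- by move=> i; rewrite in_set1 -(inj_eq val_inj) val_a /=; lia.
- move=> i j ne_ij; rewrite disjoints1 in_set1 -(inj_eq val_inj) !val_a eqn_add2l.
  by rewrite (inj_eq val_inj).
- by move=> i /= i0; rewrite maxS1 val_a i0 addn0.
- by move=> i /= i0; rewrite maxS1 val_a; lia.
Qed.

Lemma exists_optimal n k A p :
  (exists S : 'I_k -> {set 'I_n.+1}, feasible A p S) ->
  exists S : 'I_k -> {set 'I_n.+1}, optimal A p S.
Proof.
case=> S0 S0_feas.
have ffunK (T : 'I_k -> {set 'I_n.+1}) : (fun i => [ffun i => T i] i) = T.
  by apply: functional_extensionality => i; rewrite ffunE.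
pose P (f : {ffun 'I_k -> {set 'I_n.+1}}) := feasible A p (fun i => f i).
have P_S0 : exists2 f, f \in enum {ffun 'I_k -> {set 'I_n.+1}} & P f.
  by exists [ffun i => S0 i]; rewrite ?mem_enum /P ?ffunK.
have [f [f_feas f_min]] := exists_argmin_seq (fun f : {ffun _} => ratio (fun i => f i) A)
  ratio_le_trans ratio_le_total P_S0.
exists (fun i => f i); split=> // T T_feas.
by move: (f_min [ffun i => T i]); rewrite mem_enum /P ffunK; apply.
Qed.

Lemma exists_potential_min_optimal n k A p :
  1 <= p -> p + k <= n + 1 ->
  exists S : 'I_k -> {set 'I_n.+1},
    optimal A p S /\
    forall T : 'I_k -> {set 'I_n.+1}, optimal A p T -> potential S <= potential T.
Proof.
move=> p_gt0 pk_le; apply: exists_argmin_nat.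
exact/exists_optimal/exists_feasible.
Qed.

Section Threshold.
Variables (n : nat) (A : nat -> nat) (t : nat).
Let q := \max_(1 <= i < n.+1 | A i <= t) i.

Lemma leq_threshold_index j : 1 <= j <= n -> A j <= t -> j <= q.
Proof.
move=> j_range Aj_le; apply: (@leq_bigmax_seq _ _ (fun i => A i <= t) id j) => //.
by rewrite mem_index_iota ltnS.
Qed.

Hypothesis A_sorted : forall i j, 1 <= i -> i <= j -> j <= n -> A i <= A j.

Lemma threshold_index_ltE j : 1 <= j <= n -> (q < j) = (t < A j).
Proof.
move=> j_range; apply/idP/idP => [q_lt_j|t_lt_Aj].
  by rewrite ltnNge; apply: contraTN q_lt_j => /(leq_threshold_index j_range); lia.
have : q <= j.-1; last by lia.
apply/bigmax_leqP_seq => i; rewrite mem_index_iota => i_range Ai_le.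
rewrite leqNgt; apply: contraTN t_lt_Aj => lt_ij; rewrite -leqNgt.
by apply: leq_trans Ai_le; apply: A_sorted; lia.
Qed.

End Threshold.

Lemma card_interval n q d :
  q + d <= n -> #|[set j : 'I_n.+1 | q < j <= q + d]| = d.
Proof.
elim: d => [|d IHd] le_n.
  by apply/eqP; rewrite cards_eq0; apply/eqP/setP => j; rewrite !inE; lia.
have -> : [set j : 'I_n.+1 | q < j <= q + d.+1] =
          inord (q + d.+1) |: [set j : 'I_n.+1 | q < j <= q + d].
  apply/setP => j; rewrite !inE -(inj_eq val_inj) /= inordK; lia.
rewrite cardsU1 IHd ?inE ?inordK; lia.
Qed.

Lemma down_closed_interval n q (U : {set 'I_n.+1}) :
  (forall j, j \in U -> q < j) ->
  (forall j j' : 'I_n.+1, j \in U -> q < j' -> j' < j -> j' \in U) ->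
  U = [set j : 'I_n.+1 | q < j <= q + #|U|].
Proof.
move=> U_gt U_down; have [U0|[j0 j0U]] := set_0Vmem U.
  by apply/setP => j; rewrite U0 cards0 !inE; lia.
have U_gt0 : 0 < #|U| by apply/card_gt0P; exists j0.
have [m mU m_max] := @eq_bigmax_cond _ (mem U) (fun j => val j) U_gt0.
have le_m j : j \in U -> (j : nat) <= m.
  by rewrite -m_max; apply: (@bigop.leq_bigmax_cond _ (mem U) (fun j => val j)).
have q_lt_m := U_gt m mU; have m_le_n : (m : nat) <= n by rewrite -ltnS.
suff U_int : U = [set j : 'I_n.+1 | q < j <= q + (m - q)].
  by rewrite {2}U_int card_interval; first exact: U_int; lia.
apply/setP => j; rewrite inE; apply/idP/andP => [jU|[q_lt_j j_le]].
  by split; [exact: U_gt | have := le_m j jU; lia].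
case: (ltngtP j m) => [lt_jm|lt_mj|/val_inj -> //]; first exact: U_down mU q_lt_j lt_jm.
lia.
Qed.

Lemma card_bigcup_disjoint (I T : finType) (P : pred I) (F : I -> {set T}) :
  (forall i j, i != j -> [disjoint F i & F j]) ->
  #|\bigcup_(i | P i) F i| = \sum_(i | P i) #|F i|.
Proof.
move=> F_disj; pose G i := if P i then F i else set0.
have G_disj i j : i != j -> [disjoint G i & G j].
  move=> ne_ij; rewrite /G.
  by case: (P i); case: (P j); rewrite ?F_disj // -setI_eq0 ?setI0 ?set0I.
rewrite big_mkcond -/G /= -sum1_card (partition_disjoint_bigcup _ _ G_disj).
rewrite [RHS]big_mkcond /=; apply: eq_bigr => i _; rewrite sum1_card /G.
by case: (P i); rewrite ?cards0.
Qed.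

Section PotentialMinimalOptimum.
Variables (n k : nat) (A : nat -> nat) (p : nat).
Hypotheses (k_gt0 : 0 < k) (p_gt0 : 0 < p) (p_le_n : p <= n).
Hypothesis A_pos : forall i, 1 <= i <= n -> 0 < A i.
Hypothesis A_sorted : forall i j, 1 <= i -> i <= j -> j <= n -> A i <= A j.
Variable S : 'I_k -> {set 'I_n.+1}.
Hypothesis S_opt : optimal A p S.
Hypothesis S_potential_min :
  forall T : 'I_k -> {set 'I_n.+1}, optimal A p T -> potential S <= potential T.

Let S_feas : feasible A p S := S_opt.1.

Lemma idxsum_le_replacement i0 (X : {set 'I_n.+1}) :
  feasible A p (upd S i0 X) -> minsum S A <= Sigma X A <= Sigma (S i0) A ->
  idxsum (S i0) <= idxsum X.
Proof.
move=> X_feas /andP[minS_le X_le].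
have pot_le : potential S <= potential (upd S i0 X).
  apply: S_potential_min; split=> // T T_feas.
  apply: (@ratio_le_trans (ratio S A)); last exact: S_opt.2.
  apply: ratio_le_sums_within => // [|i].
    exact: feasible_minsum_gt0 S_feas p_gt0 A_pos k_gt0.
  rewrite /upd; case: eqP => _; last by rewrite minsum_le_Sigma Sigma_le_maxsum.
  by rewrite minS_le (leq_trans X_le) ?Sigma_le_maxsum.
by rewrite leqNgt; apply: contraTN pot_le => /potential_upd_lt; rewrite -ltnNge.
Qed.

Lemma maxS_mem_opt i : exists2 m, m \in S i & val m = maxS (S i).
Proof. exact/maxS_mem/(feasible_maxS_gt0 S_feas p_gt0). Qed.

Lemma Sigma_remove_lt_minsum i (e m : 'I_n.+1) :
  e \in S i -> m \in S i -> e != m -> val m = maxS (S i) ->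
  Sigma (S i :\ e) A < minsum S A.
Proof.
move=> eS mS ne_em m_max; rewrite ltnNge; apply/negP => minS_le.
have sub := subD1set (S i) e.
have m_rest : m \in S i :\ e by rewrite in_setD1 eq_sym ne_em.
have rest_feas := feasible_upd_subset S_feas sub (maxS_subset sub m_rest m_max).
have := idxsum_le_replacement rest_feas.
rewrite minS_le [leqRHS](Sigma_D1 _ eS) leq_addl (idxsum_D1 eS) => /(_ isT).
by have := feasible_mem_range S_feas eS; lia.
Qed.

Let Q := \sum_(1 <= i < p.+1) A i.
Let q := \max_(1 <= i < n.+1 | A i <= Q) i.

Lemma leq_A_Q : A p <= Q.
Proof. by rewrite /Q big_nat_recr //= leq_addl. Qed.

Lemma minsum_le_Q : minsum S A <= Q.
Proof.
have [S_ord0 [_ [max0 _]]] := S_feas; pose i0 := Ordinal k_gt0.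
apply: leq_trans (minsum_le_Sigma S A i0) (Sigma_le_sum_nat _ _ _) => // j jS.
rewrite ltnS -(max0 i0 erefl) leq_maxS // andbT.
by case/andP: (feasible_mem_range S_feas jS).
Qed.

Lemma Sigma_lt_double_Q i : (forall j, j \in S i -> A j <= Q) -> Sigma (S i) A < 2 * Q.
Proof.
move=> small; have [m mS m_max] := maxS_mem_opt i.
have Q_gt0 : 0 < Q by apply: leq_trans leq_A_Q; apply: A_pos; lia.
rewrite ltnNge; apply/negP => ge_2Q.
have [rest0|[e]] := set_0Vmem (S i :\ m).
  move: ge_2Q; rewrite -(setD1K mS) rest0 setU0 /Sigma big_set1.
  by have := small m mS; lia.
rewrite in_setD1 => /andP[ne_em eS].
have := Sigma_remove_lt_minsum eS mS ne_em m_max; move: ge_2Q.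
(* [set] identifies the convertible but syntactically different copies of this
   sum, which [lia] would otherwise treat as distinct atoms. *)
rewrite (Sigma_D1 _ eS); set rest := Sigma (S i :\ e) A.
by have := small e eS; have := minsum_le_Q; lia.
Qed.

Lemma card_set_exceeding_Q i : (exists2 j, j \in S i & Q < A j) -> #|S i| = 1.
Proof.
case=> j jS Q_lt_Aj; have [m mS m_max] := maxS_mem_opt i.
have /andP[j_gt0 _] := feasible_mem_range S_feas jS.
have /andP[_ m_le_n] := feasible_mem_range S_feas mS.
have Q_lt_Am : Q < A m.
  by apply: leq_trans Q_lt_Aj (A_sorted _ _ _); rewrite // m_max leq_maxS.
have [rest0|[e]] := set_0Vmem (S i :\ m).
  by rewrite -(setD1K mS) rest0 setU0 cards1.
rewrite in_setD1 => /andP[ne_em eS].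
have m_rest : m \in S i :\ e by rewrite in_setD1 eq_sym ne_em.
have := Sigma_remove_lt_minsum eS mS ne_em m_max.
rewrite (Sigma_D1 _ m_rest); set rest := Sigma (S i :\ e :\ m) A.
by have := minsum_le_Q; lia.
Qed.

Let large i := (#|S i| == 1) && [exists j in S i, Q < A j].
Let U := \bigcup_(i | large i) S i.

Lemma mem_large_union j : (j \in U) = [exists i, j \in S i] && (Q < A j).
Proof.
rewrite /U /large; apply/bigcupP/andP => [[i /andP[/cards1P[z Si_z] /existsP[y yS]] jS]|].
  move: yS jS; rewrite Si_z !in_set1 => /andP[/eqP -> Q_lt_Az] /eqP ->.
  by split=> //; apply/existsP; exists i; rewrite Si_z set11.
case=> /existsP[i jS] Q_lt_Aj; exists i => //; apply/andP; split.
  by apply/eqP/card_set_exceeding_Q; exists j.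
by apply/existsP; exists j; rewrite jS.
Qed.

Lemma large_union_gt j : j \in U -> q < j.
Proof.
rewrite mem_large_union => /andP[/existsP[i jS] Q_lt_Aj].
by rewrite (threshold_index_ltE _ A_sorted) // (feasible_mem_range S_feas jS).
Qed.

Lemma large_union_down (j j' : 'I_n.+1) : j \in U -> q < j' -> j' < j -> j' \in U.
Proof.
move=> jU q_lt_j' lt_j'j; apply: contraT => j'_notin.
have p_le_q : p <= q by apply: leq_threshold_index leq_A_Q; lia.
have j_le_n : (j : nat) <= n by rewrite -ltnS.
have Q_lt_Aj' : Q < A j' by rewrite -(threshold_index_ltE _ A_sorted) //; lia.
have j'_unused i : j' \notin S i.
  apply: contra j'_notin => j'S; rewrite mem_large_union Q_lt_Aj' andbT.
  by apply/existsP; exists i.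
have /bigcupP[i0 /andP[/cards1P[z Si0_z] _] jS] := jU.
have Si0 : S i0 = [set j] by move: jS; rewrite Si0_z in_set1 => /eqP ->.
have q_lt_j := large_union_gt jU.
have i0_ne0 : val i0 <> 0.
  by move/(S_feas.2.2.1); rewrite Si0 maxS1; lia.
have := idxsum_le_replacement (feasible_upd_unused S_feas j'_unused i0_ne0 _).
rewrite Si0 /idxsum /Sigma !big_set1 (leq_trans minsum_le_Q (ltnW Q_lt_Aj')).
by rewrite A_sorted //=; lia.
Qed.

Lemma card_large_union : #|U| = #|[set i | large i]|.
Proof.
rewrite card_bigcup_disjoint; last by case: S_feas => _ [].
rewrite -sum1_card; apply: eq_big => [i|i /andP[/eqP -> _]] //.
by rewrite inE.
Qed.

Lemma large_union_interval : U = [set j : 'I_n.+1 | q < j <= q + #|[set i | large i]|].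
Proof.
rewrite -card_large_union; apply: down_closed_interval.
- exact: large_union_gt.
- exact: large_union_down.
Qed.

End PotentialMinimalOptimum.

Theorem theorem9 (n k : nat) (A : nat -> nat) (p : nat) :
  2 <= k ->
  (forall i, 1 <= i <= n -> 0 < A i) ->
  (forall i j, 1 <= i -> i <= j -> j <= n -> A i <= A j) ->
  1 <= p -> p + k <= n + 1 ->
  let Q := \sum_(1 <= i < p.+1) A i in
  let q := \max_(1 <= i < n.+1 | A i <= Q) i in
  exists S : 'I_k -> {set 'I_n.+1},
    optimal A p S /\
    (forall i, (forall j, j \in S i -> A j <= Q) -> Sigma (S i) A < 2 * Q) /\
    (forall i, (exists2 j, j \in S i & Q < A j) -> #|S i| = 1) /\
    (let x := #|[set i | (#|S i| == 1) && [exists j in S i, Q < A j]]| in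
     \bigcup_(i | (#|S i| == 1) && [exists j in S i, Q < A j]) S i
       = [set j : 'I_n.+1 | q < j <= q + x]).
Proof.
move=> k_ge2 A_pos A_sorted p_gt0 pk_le Q q.
have k_gt0 : 0 < k by lia.
have p_le_n : p <= n by lia.
have [S [S_opt S_potential_min]] := exists_potential_min_optimal A p_gt0 pk_le.
exists S; split=> //; split; last split.
- exact: Sigma_lt_double_Q.
- exact: card_set_exceeding_Q.
- exact: large_union_interval.
Qed.
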